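(* Let $T$ be a finite group and $G=T\wr\mathfrak{S}_\infty$. Let $V,W$ be finite-dimensional complex Hilbert spaces, let $\pi$ be a unitary representation of $T$ on $W\otimes V$, and let $R\in End(V\otimes V)$ be an involutive $R$-matrix. Then $(\pi,R)$ is a Yang-Baxter couple if and only if $R$ satisfies the Yang-Baxter equation and $(\pi,R)$ satisfies the extended reflection equation $$\forall t,t'\in T,\qquad R_1\pi(t)R_1\pi(t')=\pi(t')R_1\pi(t)R_1 .$$
   Context: $\mathfrak{S}_\infty$ is the group of finitary permutations of $\mathbb{N}=\{1,2,\dots\}$, generated by $\sigma_i=(i\ i{+}1)$, $i\ge1$. $G=T\wr\mathfrak{S}_\infty=\left(\bigcup_n T^n\right)\rtimes\mathfrak{S}_\infty$, where $\bigcup_nT^n$ is the group of sequences $d=(t_i)_{i\ge1}$ in $T$ with $t_i=e_T$ for all but finitely many $i$ (coordinatewise product), and $\mathfrak{S}_\infty$ acts by permuting coordinates. Elements are written $g=(d,\sigma)$. An involutive $R$-matrix is $R\in End(V\otimes V)$ with $R^2=1\otimes1$ and $(R\otimes1)(1\otimes R)(R\otimes1)=(1\otimes R)(R\otimes1)(1\otimes R)$ in $End(V^{\otimes3})$. Consider the algebra $End(W)\otimes End(V)^{\otimes\infty}$ acting on $W\otimes V\otimes V\otimes\cdots$; $R_i$ denotes $R$ acting on the $i$-th and $(i{+}1)$-th copies of $V$ (identity elsewhere, including on $W$), so $R_1=1\otimes R$; $\pi(s)$ denotes $\pi(s)$ acting on $W\otimes$(first copy of $V$), tensored with the identity on the other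 factors. For $g=(d,\sigma)\in G$ put $\rho_{\pi,R}(g):=\rho_{\pi,R}((d,\mathrm{id}))\,\rho_{\pi,R}((1,\sigma))$, where $\rho_{\pi,R}((1,\sigma))$ is the Yang-Baxter representation of $\mathfrak{S}_\infty$ determined by $\sigma_i\mapsto R_i$, and for $d=(t_i)_i$, $$\rho_{\pi,R}((d,\mathrm{id})):=\pi(t_1)\,\big(R_1\pi(t_2)R_1\big)\cdots\big(R_{n-1}\cdots R_1\pi(t_n)R_1\cdots R_{n-1}\big)\cdots.$$ $(\pi,R)$ is called a Yang-Baxter couple if $g\mapsto\rho_{\pi,R}(g)$ defines a group representation of $G$ on $W\otimes V^{\otimes\infty}$. *)

From HB Require Import structures.
From mathcomp Require Import all_boot all_order all_algebra fingroup perm algC.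
Set Implicit Arguments. Unset Strict Implicit. Unset Printing Implicit Defensive.
Import Order.TTheory GRing.Theory Num.Theory.
Local Open Scope ring_scope.

(* Operators on the Hilbert space C^I (standard inner product), I a finite
   index type (an orthonormal basis); represented as square matrices. *)
Definition Op (I : finType) := 'M[algC]_#|I|.
Definition ent (I : finType) (A : Op I) (x y : I) : algC :=
  A (enum_rank x) (enum_rank y).
Definition mkOp (I : finType) (f : I -> I -> algC) : Op I :=
  \matrix_(i, j) f (enum_val i) (enum_val j).
Definition adj (I : finType) (A : Op I) : Op I := map_mx Num.conj (A^T).

Section YB.
Variables (m n : nat) (gT : finGroupType).
(* W = C^m, V = C^n. *)
Variable pi : gT -> Op ('I_m * 'I_n)%type.
Variable R : Op ('I_n * 'I_n)%type.

Definition unitary_rep := (pi 1%g = 1%:M) /\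
  (forall s t : gT, pi (s * t)%g = pi s *m pi t) /\
  (forall t : gT, pi t *m adj (pi t) = 1%:M).

Definition Rinvolutive := R *m R = 1%:M.

Definition R12 : Op ('I_n * 'I_n * 'I_n)%type :=
  mkOp (fun x y => ent R (x.1.1, x.1.2) (y.1.1, y.1.2) * (x.2 == y.2)%:R).
Definition R23 : Op ('I_n * 'I_n * 'I_n)%type :=
  mkOp (fun x y => (x.1.1 == y.1.1)%:R * ent R (x.1.2, x.2) (y.1.2, y.2)).
Definition YBE := R12 *m R23 *m R12 = R23 *m R12 *m R23.

(* Truncation: W (x) V^{(x) N.+1}; copies of V are indexed 0..N (0-based). *)
Definition idx (N : nat) := ('I_m * {ffun 'I_N.+1 -> 'I_n})%type.

(* R_{k+1} of the paper (0-based: acts on copies k and k+1), for k < N;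
   identity otherwise (never used). *)
Definition Ri (N k : nat) : Op (idx N) :=
  @mkOp (idx N) (fun x y =>
    if (k < N)%N then
      (x.1 == y.1)%:R
      * ent R (x.2 (inord k), x.2 (inord k.+1)) (y.2 (inord k), y.2 (inord k.+1))
      * [forall j : 'I_N.+1, ((j != inord k) && (j != inord k.+1)) ==> (x.2 j == y.2 j)]%:R
    else (x == y)%:R).

Definition Pi (N : nat) (t : gT) : Op (idx N) :=
  @mkOp (idx N) (fun x y => ent (pi t) (x.1, x.2 ord0) (y.1, y.2 ord0)
      * [forall j : 'I_N.+1, (j != ord0) ==> (x.2 j == y.2 j)]%:R).

(* term k t = R_{k} ... R_1 pi(t) R_1 ... R_{k}  (paper's indices) *)
Fixpoint term (N k : nat) (t : gT) : Op (idx N) :=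
  match k with
  | 0 => Pi N t
  | k'.+1 => Ri N k' *m term N k' t *m Ri N k'
  end.

(* The element G_N = T^{N+1} x| S_{N+1} of T wr S_infty (supported in the
   first N+1 coordinates). *)
Definition GN (N : nat) := ({ffun 'I_N.+1 -> gT} * {perm 'I_N.+1})%type.

(* (d, s)(d', s') = (d . s(d'), s o s'), with (s(d'))_i = d'_{s^-1 i}.
   Note: in MathComp, (s' * s) x = s (s' x), so s' * s is s o s'. *)
Definition mulG (N : nat) (g h : GN N) : GN N :=
  ([ffun i => (g.1 i * h.1 (g.2^-1%g i))%g], (h.2 * g.2)%g).

Definition unitG (N : nat) : GN N := ([ffun => 1%g], 1%g).

Definition rhoD (N : nat) (d : {ffun 'I_N.+1 -> gT}) : Op (idx N) :=
  \big[mulmx/1%:M]_(k < N.+1) term N k (d k).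

(* sigma_{k+1} = (k, k+1) in 0-based positions *)
Definition sgen (N k : nat) : {perm 'I_N.+1} := tperm (inord k) (inord k.+1).

(* Yang-Baxter couple: at each truncation level, the prescribed map
   (d, s) |-> rho((d,id)) rho((1,s)), with rho((1,.)) the representation of
   the symmetric group sending sigma_k to R_k, is a group representation. *)
Definition YBcouple : Prop :=
  forall N : nat, exists rho : GN N -> Op (idx N),
    [/\ rho (unitG N) = 1%:M,
        forall g h, rho (mulG g h) = rho g *m rho h,
        forall k, (k < N)%N -> rho ([ffun => 1%g], sgen N k) = Ri N k
      & forall d, rho (d, 1%g) = rhoD d].

Definition ERE : Prop := forall t t' : gT,
  Ri 1 0 *m Pi 1 t *m Ri 1 0 *m Pi 1 t' = Pi 1 t' *m Ri 1 0 *m Pi 1 t *m Ri 1 0.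

End YB.

(* Write [r k] for R_{k+1} acting on W (x) V^{(x) N+1}, [P t] for pi(t) acting
   on W (x) (first copy of V), and [coord_rep k t] for the k-th factor
   r_{k-1} ... r_0 P(t) r_0 ... r_{k-1} of rho((d, id)).  Every relation used
   is local, i.e. lives on a few tensor factors, where it becomes the
   Yang-Baxter equation, the involutivity of R, the commutation of A (x) 1
   with 1 (x) B, or the reflection equation.
   Involutivity and the Yang-Baxter equation are the Coxeter relations for
   the r_k, so sigma_k |-> r_k extends to a representation phi of S_{N+1} (the
   Coxeter presentation, proved by a descent and diamond argument).  Adding
   the reflection equation, r and P satisfy the defining relations of the
   wreath product: the coord_rep k are then pairwise commuting representations
   of T that conjugation by r_k permutes like sigma_k, which makes
   (d, sigma) |-> rho(d) phi(sigma) a representation.  Conversely, at level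
   N = 1 the base elements (1, t) and (t', 1) commute, and their images
   R_1 pi(t) R_1 and pi(t') commute exactly by the reflection equation. *)

From HB Require Import structures.
From mathcomp Require Import all_boot all_order all_algebra fingroup perm algC.
From mathcomp Require Import ring zify.
Set Implicit Arguments. Unset Strict Implicit. Unset Printing Implicit Defensive.
Import Order.TTheory GRing.Theory Num.Theory.
Local Open Scope ring_scope.

(** * Operators on finite tensor products *)

HB.instance Definition _ (R : pzRingType) (d : nat) :=
  Monoid.isLaw.Build 'M[R]_d 1%:M (@mulmx _ d d d)
    (@mulmxA _ d d d d) (@mul1mx _ d d) (@mulmx1 _ d d).

Section SquareMatrixProducts.
Variables (R : pzRingType) (d : nat).
Implicit Types (X Y : 'M[R]_d) (F G : nat -> 'M[R]_d).

Lemma comm_mx_prod n X F : (forall j, (j < n)%N -> comm_mx X (F j)) ->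
  comm_mx X (\big[mulmx/1%:M]_(0 <= j < n) F j).
Proof.
elim: n => [|n IHn] XF; first by rewrite big_geq //; apply: comm_mx1.
rewrite big_nat_recr //=; apply: comm_mxM; last exact: XF.
by apply: IHn => j ltjn; apply: XF; apply: ltnW.
Qed.

Lemma big_mulmx_split n F G :
  (forall j k, (j < k < n)%N -> comm_mx (G j) (F k)) ->
  \big[mulmx/1%:M]_(0 <= k < n) (F k *m G k) =
  (\big[mulmx/1%:M]_(0 <= k < n) F k) *m (\big[mulmx/1%:M]_(0 <= k < n) G k).
Proof.
elim: n => [|n IHn] GF; first by rewrite !big_geq // mulmx1.
rewrite !big_nat_recr //= IHn => [|j k /andP [ljk lkn]]; last first.
  by apply: GF; rewrite ljk ltnW.
have comm_GF : comm_mx (\big[mulmx/1%:M]_(0 <= j < n) G j) (F n).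
  apply/comm_mx_sym/comm_mx_prod => j ltjn.
  by apply/comm_mx_sym/GF; rewrite ltjn /=.
by rewrite !mulmxA -[_ *m _ *m F n]mulmxA comm_GF !mulmxA.
Qed.

Lemma mulmx_prod_conj n X F : X *m X = 1%:M ->
  X *m \big[mulmx/1%:M]_(0 <= k < n) F k =
  \big[mulmx/1%:M]_(0 <= k < n) (X *m F k *m X) *m X.
Proof.
move=> XX; elim: n => [|n IHn]; first by rewrite !big_geq // mul1mx mulmx1.
rewrite !big_nat_recr //= mulmxA IHn -!mulmxA.
by congr (_ *m _); rewrite XX mulmx1.
Qed.

Lemma conj_comm_involution X Y : X *m X = 1%:M -> comm_mx X Y -> X *m Y *m X = Y.
Proof. by move=> XX XY; rewrite XY -mulmxA XX mulmx1. Qed.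

End SquareMatrixProducts.

Section OperatorEntries.
Variable I : finType.

Lemma entE (f : I -> I -> algC) x y : ent (mkOp f) x y = f x y.
Proof. by rewrite /ent /mkOp mxE !enum_rankK. Qed.

Lemma opP (A B : Op I) : (forall x y, ent A x y = ent B x y) -> A = B.
Proof.
move=> eqAB; apply/matrixP => i j.
by have := eqAB (enum_val i) (enum_val j); rewrite /ent !enum_valK.
Qed.

Lemma ent1 x y : ent (1%:M : Op I) x y = (x == y)%:R.
Proof. by rewrite /ent mxE (inj_eq enum_rank_inj). Qed.

Lemma entM (A B : Op I) x y : ent (A *m B) x y = \sum_z ent A x z * ent B z y.
Proof.
rewrite /ent mxE (reindex (@enum_rank I)) //.
by exists enum_val => z _; rewrite ?enum_rankK ?enum_valK.
Qed.

Lemma sum_deltal (F : I -> algC) a : \sum_z (a == z)%:R * F z = F a.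
Proof.
rewrite (bigD1 a) //= eqxx mul1r big1 ?addr0 // => z /negbTE.
by rewrite eq_sym => ->; rewrite mul0r.
Qed.

Lemma sum_deltar (F : I -> algC) a : \sum_z F z * (z == a)%:R = F a.
Proof. by rewrite -(sum_deltal F a); apply: eq_bigr => z _; rewrite mulrC eq_sym. Qed.

End OperatorEntries.

Section Factorization.
Variables (I J K : finType) (p : I -> J) (q : I -> K).

(* [I] is the disjoint union over the values of [q] of copies of [J],
   each fibre of [q] being mapped bijectively onto [J] by [p]. *)
Definition factorization : Prop :=
  (forall x y, q x = q y -> p x = p y -> x = y) /\
  (forall x j, exists z, p z = j /\ q z = q x).

Definition loc (A : Op J) : Op I :=
  mkOp (fun x y => ent A (p x) (p y) * (q x == q y)%:R).

Hypothesis pq : factorization.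

Lemma sum_fibre x (G : J -> algC) :
  \sum_z (q z == q x)%:R * G (p z) = \sum_j G j.
Proof.
have [pq_inj fibre] := pq.
rewrite (partition_big p xpredT) //=; apply: eq_bigr => j _.
have [z0 [<- qz0]] := fibre x j.
rewrite (bigD1 z0) //= qz0 eqxx mul1r big1 ?addr0 // => z /andP [/eqP pz z_z0].
case: eqP => [qz|_]; last by rewrite mul0r.
by rewrite (pq_inj z z0) ?qz ?eqxx in z_z0.
Qed.

Lemma locM (A B : Op J) : loc A *m loc B = loc (A *m B).
Proof.
apply: opP => x y; rewrite entM !entE entM big_distrl /= -(sum_fibre x).
apply: eq_bigr => z _; rewrite !entE.
have [->|_] := eqVneq (q z) (q x); last by rewrite mulr0 !mul0r.
by rewrite mulr1 mul1r mulrA.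
Qed.

Lemma loc1 : loc 1%:M = 1%:M.
Proof.
apply: opP => x y; rewrite entE !ent1 -natrM mulnb; congr (nat_of_bool _)%:R.
have [pq_inj _] := pq.
by apply/andP/eqP => [[/eqP pxy /eqP qxy]|->]; [apply: pq_inj | rewrite !eqxx].
Qed.

End Factorization.

Lemma sum_pair (J1 J2 : finType) (G : (J1 * J2)%type -> algC) :
  \sum_c G c = \sum_c1 \sum_c2 G (c1, c2).
Proof. by rewrite pair_bigA; apply: eq_bigr => -[]. Qed.

Section Tensor.
Variables (J1 J2 : finType).

Definition ltens (A : Op J1) : Op (J1 * J2)%type :=
  mkOp (fun a b => ent A a.1 b.1 * (a.2 == b.2)%:R).
Definition rtens (B : Op J2) : Op (J1 * J2)%type :=
  mkOp (fun a b => (a.1 == b.1)%:R * ent B a.2 b.2).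

Lemma ent_ltens_rtens A B a b :
  ent (ltens A *m rtens B) a b = ent A a.1 b.1 * ent B a.2 b.2.
Proof.
rewrite entM sum_pair -[RHS](sum_deltar (fun c1 => ent A a.1 c1 * ent B a.2 b.2)).
apply: eq_bigr => c1 _; under eq_bigr do rewrite !entE /=.
transitivity (\sum_c2 (a.2 == c2)%:R * (ent A a.1 c1 * (c1 == b.1)%:R * ent B c2 b.2)).
  by apply: eq_bigr => c2 _; ring.
by rewrite sum_deltal; ring.
Qed.

Lemma ent_rtens_ltens A B a b :
  ent (rtens B *m ltens A) a b = ent A a.1 b.1 * ent B a.2 b.2.
Proof.
rewrite entM sum_pair -[RHS](sum_deltal (fun c1 => ent A c1 b.1 * ent B a.2 b.2) a.1).
apply: eq_bigr => c1 _; under eq_bigr do rewrite !entE /=.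
transitivity (\sum_c2 (a.1 == c1)%:R * ent A c1 b.1 * ent B a.2 c2 * (c2 == b.2)%:R).
  by apply: eq_bigr => c2 _; ring.
by rewrite sum_deltar; ring.
Qed.

Lemma ltens_rtens_comm A B : comm_mx (ltens A) (rtens B).
Proof. by apply: opP => a b; rewrite ent_ltens_rtens ent_rtens_ltens. Qed.

End Tensor.

(** * Transpositions and descents *)

Definition swapn (k x : nat) := if x == k then k.+1 else if x == k.+1 then k else x.

Lemma swapnL k : swapn k k = k.+1. Proof. by rewrite /swapn eqxx. Qed.
Lemma swapnR k : swapn k k.+1 = k. Proof. by rewrite /swapn eqxx; case: eqP => //; lia. Qed.
Lemma swapn_id k x : x <> k -> x <> k.+1 -> swapn k x = x.
Proof. by rewrite /swapn => /eqP/negbTE-> /eqP/negbTE->. Qed.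

Lemma swapnP k x : [\/ x = k /\ swapn k x = k.+1, x = k.+1 /\ swapn k x = k |
  [/\ x <> k, x <> k.+1 & swapn k x = x]].
Proof.
rewrite /swapn; case: eqP => [->|ne_k]; first by constructor 1.
by case: eqP => [->|ne_k1]; [constructor 2 | constructor 3].
Qed.

Section Transpositions.
Variable N : nat.
Local Notation sg := (sgen N).
Implicit Types (s : {perm 'I_N.+1}) (k : nat).

Lemma inord_eq j k : (j <= N)%N -> (k <= N)%N ->
  ((inord j : 'I_N.+1) == inord k) = (j == k).
Proof. by move=> le_jN le_kN; rewrite -(inj_eq val_inj) /= !inordK. Qed.

Lemma sgen_val k (i : 'I_N.+1) : (k < N)%N -> nat_of_ord (sg k i) = swapn k i.
Proof.
move=> lt_kN; rewrite /sgen permE /= /swapn -!val_eqE /= !inordK; try lia.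
case: eqP => _; first by rewrite inordK; lia.
by case: eqP => _ //; rewrite inordK; lia.
Qed.

Lemma sgenE k (i : 'I_N.+1) : (k < N)%N ->
  sg k i = if i == inord k then inord k.+1 else if i == inord k.+1 then inord k else i.
Proof. by move=> lt_kN; rewrite /sgen permE. Qed.

Lemma sgenKl k s : (sg k * (sg k * s))%g = s.
Proof. by rewrite mulgA /sgen tperm2 mul1g. Qed.

Lemma sgen_inord k j : (k < N)%N -> (j <= N)%N -> sg k (inord j) = inord (swapn k j).
Proof.
move=> lt_kN le_jN; apply/val_inj.
by rewrite /= sgen_val // !inordK //; case: (swapnP k j) => [[_ ->]|[_ ->]|[_ _ ->]]; lia.
Qed.

Ltac swapn_cases := let h := fresh in move=> h; case: h => [[? ?]|[? ?]|[? ? ?]].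

Lemma sgen_comm j k : (j.+1 < k)%N -> (k < N)%N -> (sg j * sg k = sg k * sg j)%g.
Proof.
move=> lt_j1k lt_kN; apply/permP => i; apply/val_inj; rewrite !permM /= !sgen_val //; try lia.
move: (nat_of_ord i) => x.
move: (swapnP j x) (swapnP k x) (swapnP k (swapn j x)) (swapnP j (swapn k x)).
by do 4!swapn_cases; lia.
Qed.

Lemma sgen_braid k : (k.+1 < N)%N ->
  (sg k * sg k.+1 * sg k = sg k.+1 * sg k * sg k.+1)%g.
Proof.
move=> lt_k1N; apply/permP => i; apply/val_inj; rewrite !permM /= !sgen_val //; try lia.
move: (nat_of_ord i) => x.
move: (swapnP k x) (swapnP k.+1 (swapn k x)) (swapnP k (swapn k.+1 (swapn k x))).
move: (swapnP k.+1 x) (swapnP k (swapn k.+1 x)) (swapnP k.+1 (swapn k (swapn k.+1 x))).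
by do 6!swapn_cases; lia.
Qed.

Definition descent s k := (k < N)%N && (s (inord k.+1) < s (inord k))%N.

Lemma descent1 k : ~~ descent 1%g k.
Proof. by apply/andP => -[lt_kN]; rewrite !perm1 !inordK; lia. Qed.

Lemma descent_sgen s k : (k < N)%N -> ~~ descent s k -> descent (sg k * s) k.
Proof.
move=> lt_kN; rewrite /descent lt_kN /= -leqNgt !permM !sgen_inord ?swapnL ?swapnR //; try lia.
rewrite leq_eqVlt => /orP [/eqP/val_inj/perm_inj/eqP|//].
by rewrite inord_eq; lia.
Qed.

Lemma descent_far s j k : descent s j -> descent s k -> (j.+1 < k \/ k.+1 < j)%N ->
  descent (sg j * s) k.
Proof.
move=> /andP [lt_jN _] /andP [lt_kN desc_k] far; rewrite /descent lt_kN.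
by rewrite !permM !sgen_inord ?swapn_id //; lia.
Qed.

Lemma descent_braid s k : descent s k -> descent s k.+1 ->
  [/\ descent (sg k * s) k.+1, descent (sg k.+1 * (sg k * s)) k,
      descent (sg k.+1 * s) k & descent (sg k * (sg k.+1 * s)) k.+1].
Proof.
move=> /andP [lt_kN desc_k] /andP [lt_k1N desc_k1]; rewrite /descent lt_kN lt_k1N.
by split; rewrite !permM !(swapnL, swapnR, @swapn_id k k.+2, @swapn_id k.+1 k, sgen_inord); lia.
Qed.

Definition weight s := (\sum_(i : 'I_N.+1) i * s i)%N.

Definition defect s := (N.+1 ^ 3 - weight s)%N.

Lemma weight_bound s : (weight s <= N.+1 ^ 3)%N.
Proof.
apply: leq_trans (_ : \sum_(i : 'I_N.+1) N.+1 * N.+1 <= _)%N.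
  by apply: leq_sum => i _; apply: leq_mul; apply: ltnW.
by rewrite sum_nat_const card_ord expnS mulnA.
Qed.

Lemma sumn_bigD2 (F : 'I_N.+1 -> nat) a b : a != b ->
  (\sum_i F i = F a + F b + \sum_(i | (i != a) && (i != b)) F i)%N.
Proof.
move=> ne_ab; rewrite (bigD1 a) //= (bigD1 b) 1?eq_sym //= addnA.
by congr (_ + _)%N; apply: eq_bigl => i; rewrite andbC.
Qed.

(* [sg k * s] swaps the values of [s] at [k] and [k.+1]; at a descent this
   raises the weight by [s k - s k.+1]. *)
Lemma weight_sgen_descent s k : descent s k -> (weight s < weight (sg k * s))%N.
Proof.
case/andP => lt_kN desc_k.
rewrite /weight [X in (_ < X)%N](reindex_inj (@perm_inj _ (sg k))) /=.
under [X in (_ < X)%N]eq_bigr => i _ do rewrite permM /sgen tpermK.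
have ne_k : (inord k : 'I_N.+1) != inord k.+1 by rewrite inord_eq //; lia.
rewrite (sumn_bigD2 _ ne_k) [X in (_ < X)%N](sumn_bigD2 _ ne_k).
under [X in (_ < _ + X)%N]eq_bigr => i /andP [ne_ik ne_ik1].
  by rewrite sgenE // (negbTE ne_ik) (negbTE ne_ik1); over.
by rewrite !sgenE // eqxx eq_sym (negbTE ne_k) eqxx !inordK //; lia.
Qed.

Lemma defect_sgen_descent s k : descent s k -> (defect (sg k * s) < defect s)%N.
Proof.
move=> /weight_sgen_descent lt_weight; have := weight_bound (sg k * s).
by rewrite /defect; lia.
Qed.

Lemma no_descent_perm1 s : (forall k, (k < N)%N -> ~~ descent s k) -> s = 1%g.
Proof.
move=> no_desc.
have s_incr i : (i < N)%N -> (s (inord i) < s (inord i.+1))%N.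
  move=> lt_iN; have := no_desc i lt_iN; rewrite /descent lt_iN -leqNgt leq_eqVlt.
  by case/orP=> // /eqP/val_inj/perm_inj/eqP; rewrite inord_eq; lia.
have s_ge i : (i <= N)%N -> (i <= s (inord i))%N.
  elim: i => // i IHi lt_iN; exact: leq_ltn_trans (IHi (ltnW lt_iN)) (s_incr i lt_iN).
have sum_s : (\sum_(i : 'I_N.+1) s i = \sum_(i : 'I_N.+1) i)%N.
  by rewrite (reindex_inj (@perm_inj _ s^-1)); apply: eq_bigr => i _; rewrite permKV.
have s_ge' (i : 'I_N.+1) : (i <= s i)%N.
  by have := s_ge i (ltnSE (ltn_ord i)); rewrite inord_val.
apply/permP => i; rewrite perm1; apply/val_inj/eqP; rewrite eqn_leq s_ge' andbT.
have : (\sum_(j : 'I_N.+1) (s j - j) = 0)%N.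
  by rewrite sumnB ?sum_s ?subnn // => j _; apply: s_ge'.
by move/eqP; rewrite sum_nat_eq0 => /forallP /(_ i); rewrite subn_eq0.
Qed.

Lemma descentP s : {k : 'I_N | descent s k} + {s = 1%g}.
Proof.
case: (pickP (fun k : 'I_N => descent s k)) => [k desc_k|no_desc]; first by left; exists k.
by right; apply: no_descent_perm1 => k lt_kN; rewrite (no_desc (Ordinal lt_kN)).
Qed.

Lemma sgen_ind (P : {perm 'I_N.+1} -> Prop) :
  P 1%g -> (forall s k, (k < N)%N -> P s -> P (sg k * s)%g) -> forall s, P s.
Proof.
move=> P1 PS s; elim: {s}(defect s).+1 {-2}s (ltnSn (defect s)) => // c IHc s lt_sc.
case: (descentP s) => [[k desc_k]|->] //; rewrite -(sgenKl k s).
apply: PS; first by case/andP: desc_k.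
by apply: IHc; have := defect_sgen_descent desc_k; lia.
Qed.

End Transpositions.

(** * The Coxeter presentation of the symmetric group *)

Record coxeter_relations (R : pzRingType) (d N : nat) (r : nat -> 'M[R]_d) : Prop :=
  CoxeterRelations {
    coxeter_invol : forall k, (k < N)%N -> r k *m r k = 1%:M;
    coxeter_braid : forall k, (k.+1 < N)%N ->
      r k *m r k.+1 *m r k = r k.+1 *m r k *m r k.+1;
    coxeter_comm : forall j k, (j.+1 < k)%N -> (k < N)%N -> r j *m r k = r k *m r j
  }.

Section CoxeterPresentation.
Variables (R : pzRingType) (d N : nat) (r : nat -> 'M[R]_d).
Hypothesis cox : coxeter_relations N r.
Local Notation sg := (sgen N).
Implicit Types (s t : {perm 'I_N.+1}) (k : nat).

(* Peel off a left descent at each step; since [defect] decreases strictly,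
   [(N.+1 ^ 3).+1] steps always suffice. *)
Fixpoint perm_rep_fuel (c : nat) s : 'M[R]_d :=
  if c is c'.+1 then
    if descentP s is inleft (exist k _) then perm_rep_fuel c' (sg k * s) *m r k
    else 1%:M
  else 1%:M.

Definition perm_rep s := perm_rep_fuel (N.+1 ^ 3).+1 s.

Lemma perm_rep_fuel_stable c1 c2 s : (defect s < c1)%N -> (defect s < c2)%N ->
  perm_rep_fuel c1 s = perm_rep_fuel c2 s.
Proof.
elim: c1 c2 s => [|c1 IHc] [|c2] s //= lt_s1 lt_s2.
case: (descentP s) => [[k desc_k]|_] //; congr (_ *m _).
by apply: IHc; have := defect_sgen_descent desc_k; lia.
Qed.

Lemma perm_rep_unfold s : perm_rep s =
  if descentP s is inleft (exist k _) then perm_rep (sg k * s) *m r k else 1%:M.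
Proof.
rewrite -[LHS]/(if descentP s is inleft (exist k _)
  then perm_rep_fuel (N.+1 ^ 3) (sg k * s) *m r k else 1%:M).
case: (descentP s) => [[k desc_k]|_] //; congr (_ *m _).
by apply: perm_rep_fuel_stable; have := defect_sgen_descent desc_k; rewrite /defect; lia.
Qed.

Lemma perm_rep1 : perm_rep 1 = 1%:M.
Proof.
rewrite perm_rep_unfold; case: (descentP 1) => [[k desc_k]|_] //.
by have := descent1 N k; rewrite desc_k.
Qed.

(* Diamond lemma: peeling off two different left descents gives the same
   result, by the braid and commutation relations. *)
Lemma perm_rep_confluent s :
    (forall s' k, (defect s' < defect s)%N -> descent s' k ->
       perm_rep s' = perm_rep (sg k * s') *m r k) ->
  forall j k, descent s j -> descent s k ->
    perm_rep (sg j * s) *m r j = perm_rep (sg k * s) *m r k.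
Proof.
move=> IH j k; wlog le_jk : j k / (j <= k)%N.
  move=> gen desc_j desc_k; have [le_jk|/ltnW le_kj] := leqP j k; first exact: gen.
  by symmetry; apply: gen.
move=> desc_j desc_k; have dec_j := defect_sgen_descent desc_j.
have dec_k := defect_sgen_descent desc_k.
have [lt_kN _] := andP desc_k.
case: (ltngtP j k) le_jk => [lt_jk _|//|-> //].
have [k_j1|far] := eqVneq k j.+1.
  subst k; have [d1 d2 d3 d4] := descent_braid desc_j desc_k.
  have dec1 := defect_sgen_descent d1; have dec3 := defect_sgen_descent d3.
  rewrite (IH _ _ _ d1) ?(IH _ _ _ d2) ?(IH _ _ _ d3) ?(IH _ _ _ d4); try lia.
  by rewrite !mulgA sgen_braid // -!(mulmxA (perm_rep _)) (coxeter_braid cox).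
have far_jk : (j.+1 < k)%N by lia.
have d1 := descent_far desc_j desc_k (or_introl far_jk).
have d2 := descent_far desc_k desc_j (or_intror far_jk).
rewrite (IH _ _ dec_j d1) (IH _ _ dec_k d2) !mulgA (sgen_comm far_jk lt_kN).
by rewrite -!mulmxA (coxeter_comm cox far_jk lt_kN).
Qed.

Lemma perm_rep_descent s k : descent s k -> perm_rep s = perm_rep (sg k * s) *m r k.
Proof.
elim: {s}(defect s).+1 {-2}s (ltnSn (defect s)) k => // c IHc s lt_sc k desc_k.
rewrite perm_rep_unfold; case: (descentP s) => [[j desc_j]|s1]; last first.
  by have := descent1 N k; rewrite -s1 desc_k.
apply: perm_rep_confluent desc_j desc_k => s' k' lt_s's; apply: IHc; lia.
Qed.

Lemma perm_rep_sgenM s k : (k < N)%N -> perm_rep (sg k * s) = perm_rep s *m r k.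
Proof.
move=> lt_kN; have [desc_k|/(descent_sgen lt_kN)/perm_rep_descent->] := boolP (descent s k).
  by rewrite (perm_rep_descent desc_k) -mulmxA (coxeter_invol cox) // mulmx1.
by rewrite sgenKl.
Qed.

Lemma perm_repM s t : perm_rep (t * s) = perm_rep s *m perm_rep t.
Proof.
elim/(@sgen_ind N): t => [|t k lt_kN IHt]; first by rewrite mul1g perm_rep1 mulmx1.
by rewrite -mulgA !perm_rep_sgenM // IHt mulmxA.
Qed.

Lemma perm_rep_sgen k : (k < N)%N -> perm_rep (sg k) = r k.
Proof. by move=> lt_kN; rewrite -(mulg1 (sg k)) perm_rep_sgenM // perm_rep1 mul1mx. Qed.

End CoxeterPresentation.

(** * Relations of the wreath product *)

(* The defining relations of T wr S_{N+1} in terms of the Coxeter generators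
   [r k] and the copy [P] of T sitting in the first coordinate. *)
Record wreath_relations (R : pzRingType) (gT : finGroupType) (d N : nat)
    (r : nat -> 'M[R]_d) (P : gT -> 'M[R]_d) : Prop := WreathRelations {
  wreath_coxeter : coxeter_relations N r;
  wreath_P1 : P 1%g = 1%:M;
  wreath_PM : forall s t, P (s * t)%g = P s *m P t;
  wreath_comm : forall t k, (0 < k < N)%N -> comm_mx (P t) (r k);
  wreath_reflection : (0 < N)%N -> forall t t',
    r 0 *m P t *m r 0 *m P t' = P t' *m r 0 *m P t *m r 0
}.

Section WreathRelations.
Variables (R : pzRingType) (gT : finGroupType) (d N : nat).
Variables (r : nat -> 'M[R]_d) (P : gT -> 'M[R]_d).
Hypothesis wr : wreath_relations N r P.
Implicit Types (j k : nat) (s t : gT).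

Let r_invol k : (k < N)%N -> r k *m r k = 1%:M.
Proof. exact: coxeter_invol (wreath_coxeter wr) k. Qed.

Fixpoint coord_rep k t : 'M[R]_d :=
  if k is k'.+1 then r k' *m coord_rep k' t *m r k' else P t.

Lemma coord_rep1 k : (k <= N)%N -> coord_rep k 1%g = 1%:M.
Proof.
elim: k => [|k IHk] le_kN /=; first exact: wreath_P1 wr.
by rewrite IHk ?mulmx1 ?r_invol //; apply: ltnW.
Qed.

Lemma coord_repM k s t : (k <= N)%N -> coord_rep k (s * t) = coord_rep k s *m coord_rep k t.
Proof.
elim: k => [|k IHk] le_kN /=; first exact: (wreath_PM wr s t).
rewrite IHk 1?ltnW // !mulmxA.
by rewrite -[_ *m r k *m r k]mulmxA r_invol // mulmx1.
Qed.

Lemma comm_r_coord_rep_lt j k t : (j < k < N)%N -> comm_mx (r k) (coord_rep j t).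
Proof.
elim: j => [|j IHj] /andP [lt_jk lt_kN] /=.
  by apply/comm_mx_sym/(wreath_comm wr); rewrite lt_jk.
have r_jk : comm_mx (r k) (r j).
  by apply/comm_mx_sym/(coxeter_comm (wreath_coxeter wr)).
by apply: comm_mxM; [apply: comm_mxM|] => //; apply: IHj; rewrite lt_kN andbT ltnW.
Qed.

(* For [j = k.+2] use [r k r k.+1 r k = r k.+1 r k r k.+1] and that [r k.+1]
   commutes with [coord_rep k]. *)
Lemma comm_r_coord_rep_gt k j t : (k.+2 <= j <= N)%N -> comm_mx (r k) (coord_rep j t).
Proof.
elim: j => [//|j IHj] /andP [le_k2j le_jN].
have [j_k1|ne_jk1] := eqVneq j k.+1.
  subst j; rewrite /comm_mx /=.
  have r_k1 : comm_mx (r k.+1) (coord_rep k t) by apply: comm_r_coord_rep_lt; lia.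
  have braid := coxeter_braid (wreath_coxeter wr) le_jN.
  rewrite !mulmxA braid -(mulmxA (r k.+1 *m r k)) r_k1 mulmxA -!mulmxA.
  by do 3!congr (_ *m _); rewrite !mulmxA braid.
have r_kj : comm_mx (r k) (r j) by apply: (coxeter_comm (wreath_coxeter wr)); lia.
by apply: comm_mxM; [apply: comm_mxM|] => //; apply: IHj; lia.
Qed.

Lemma coord_rep_conj k t : (k < N)%N -> r k *m coord_rep k.+1 t *m r k = coord_rep k t.
Proof. by move=> lt_kN /=; rewrite !mulmxA r_invol // mul1mx -mulmxA r_invol // mulmx1. Qed.

(* For [k = 1] this is the reflection relation. *)
Lemma comm_P_coord_rep k t t' : (0 < k <= N)%N -> comm_mx (P t) (coord_rep k t').
Proof.
elim: k => [//|[|k] IHk] /andP [_ le_kN] /=.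
  by rewrite /comm_mx !mulmxA (wreath_reflection wr).
have P_r : comm_mx (P t) (r k.+1) by apply: (wreath_comm wr); lia.
by apply: comm_mxM; [apply: comm_mxM|] => //; apply: IHk; lia.
Qed.

Lemma comm_coord_rep j k t t' : (j < k <= N)%N ->
  comm_mx (coord_rep j t) (coord_rep k t').
Proof.
elim: j k => [|j IHj] k /andP [lt_jk le_kN] /=.
  by apply: comm_P_coord_rep; rewrite lt_jk.
have r_j : comm_mx (r j) (coord_rep k t') by apply: comm_r_coord_rep_gt; lia.
apply/comm_mx_sym/comm_mxM; [apply: comm_mxM|]; rewrite ?comm_mx_sym //.
by apply/comm_mx_sym/IHj; lia.
Qed.

Definition base_rep (f : nat -> gT) :=
  \big[mulmx/1%:M]_(0 <= k < N.+1) coord_rep k (f k).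

Lemma base_repM f g : base_rep (fun k => f k * g k)%g = base_rep f *m base_rep g.
Proof.
rewrite /base_rep -big_mulmx_split => [|j k /andP [lt_jk lt_kN1]].
  by apply: eq_big_nat => k /andP [_ lt_kN1]; rewrite coord_repM.
by apply: comm_coord_rep; rewrite lt_jk.
Qed.

Lemma base_rep1 : base_rep (fun _ => 1%g) = 1%:M.
Proof.
rewrite /base_rep big1_seq // => k; rewrite mem_index_iota => /andP [_].
exact: coord_rep1.
Qed.

Lemma r_base_rep k f : (k < N)%N ->
  r k *m base_rep f = base_rep (fun i => f (swapn k i)) *m r k.
Proof.
move=> lt_kN; rewrite /base_rep mulmx_prod_conj ?r_invol //; congr (_ *m _).
have le_kN1 : (k <= N.+1)%N by lia.
rewrite [LHS](big_cat_nat (n := k)) // [RHS](big_cat_nat (n := k)) //=.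
congr (_ *m _).
  apply: eq_big_nat => i /andP [_ lt_ik]; rewrite swapn_id; try lia.
  by apply: conj_comm_involution; [apply: r_invol | apply: comm_r_coord_rep_lt; lia].
have lt_kN1 : (k < N.+1)%N by lia.
have lt_k1N1 : (k.+1 < N.+1)%N by lia.
rewrite !(big_ltn lt_kN1) !(big_ltn lt_k1N1) swapnL swapnR coord_rep_conj //.
rewrite -[r k *m coord_rep k (f k) *m r k]/(coord_rep k.+1 (f k)) [LHS]mulmxA [RHS]mulmxA.
have comm_k_k1 : comm_mx (coord_rep k (f k.+1)) (coord_rep k.+1 (f k)).
  by apply: comm_coord_rep; rewrite ltnSn.
rewrite comm_k_k1; congr (_ *m _).
apply: eq_big_nat => i /andP [lt_k1i lt_iN1]; rewrite swapn_id; try lia.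
by apply: conj_comm_involution; [apply: r_invol | apply: comm_r_coord_rep_gt; lia].
Qed.

End WreathRelations.

(** * Local operators on W (x) V^{(x) N+1} *)

Section Coordinates.
Variables (m n N : nat).
Local Notation I := (idx m n N).
Local Notation F := {ffun 'I_N.+1 -> 'I_n}.
Implicit Types (S T : pred 'I_N.+1) (f g : F) (x y : I).

Definition ffun_upd f a v : F := [ffun i => if i == a then v else f i].

Definition mask S f : {ffun 'I_N.+1 -> option 'I_n} :=
  [ffun i => if S i then None else Some (f i)].

Definition agree_off S f g := [forall i, ~~ S i ==> (f i == g i)].

Lemma ffun_updE f a v i : ffun_upd f a v i = if i == a then v else f i.
Proof. by rewrite ffunE. Qed.

Lemma mask_eq S f g : (mask S f == mask S g) = agree_off S f g.
Proof.
apply/eqP/forallP => [/ffunP eq_fg i|agree]; last first.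
  apply/ffunP => i; rewrite !ffunE; case: ifP => // /negbT S'i.
  by have /implyP/(_ S'i)/eqP-> := agree i.
by apply/implyP => S'i; have := eq_fg i; rewrite !ffunE (negbTE S'i) => -[->].
Qed.

Lemma mask_inj S f g : mask S f = mask S g -> (forall i, S i -> f i = g i) -> f = g.
Proof.
move=> /eqP; rewrite mask_eq => /forallP agree eq_S; apply/ffunP => i.
by case S_i: (S i); [apply: eq_S | apply/eqP/(implyP (agree i)); rewrite S_i].
Qed.

Lemma mask_upd S f a v : S a -> mask S (ffun_upd f a v) = mask S f.
Proof.
move=> S_a; apply/ffunP => i; rewrite !ffunE.
by case: ifP => // S'i; case: eqP => // i_a; rewrite i_a S_a in S'i.
Qed.

Lemma agree_off_split S T c f g : ~~ S c -> T =1 [pred i | S i || (i == c)] ->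
  agree_off S f g = (f c == g c) && agree_off T f g.
Proof.
move=> S'c eq_T; apply/forallP/andP => [agree|[eq_c /forallP agree] i].
  split; first exact: (implyP (agree c)).
  by apply/forallP => i; rewrite eq_T negb_or; apply/implyP => /andP [/(implyP (agree i))].
apply/implyP => S'i; have [->//|ne_ic] := eqVneq i c.
by apply: (implyP (agree i)); rewrite eq_T negb_or S'i.
Qed.

Lemma idx_ext x y : x.1 = y.1 -> x.2 = y.2 -> x = y.
Proof. by case: x y => [? ?] [? ?] /= -> ->. Qed.

(* [at* x] are the coordinates of [x] a local operator acts on, [off* x] the
   others; [W] stands for the factor W, [a b c e] for copies of V. *)
Section Positions.
Variables (a b c e : 'I_N.+1).

Definition at2 x := (x.2 a, x.2 b).
Definition off2 x := (x.1, mask (pred2 a b) x.2).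

Definition at3 x := (x.2 a, x.2 b, x.2 c).
Definition off3 x := (x.1, mask (pred3 a b c) x.2).

Definition at4 x := ((x.2 a, x.2 b), (x.2 c, x.2 e)).
Definition off4 x := (x.1, mask (pred4 a b c e) x.2).

Definition atW x := (x.1, x.2 ord0).
Definition offW x := mask (pred1 ord0) x.2.

Definition atW3 x := ((x.1, x.2 ord0), (x.2 b, x.2 c)).
Definition offW3 x := mask (pred3 ord0 b c) x.2.

Lemma factorization2 : a != b -> factorization at2 off2.
Proof.
move=> ab; split=> [x y [eq1 eq2] [eq_a eq_b]|x [va vb]].
  by apply: idx_ext eq1 (mask_inj eq2 _) => i /pred2P [] ->.
exists (x.1, ffun_upd (ffun_upd x.2 a va) b vb).
by rewrite /at2 /off2 /= !ffun_updE !mask_upd ?inE ?eqxx ?orbT // (negbTE ab).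
Qed.

Lemma factorization3 : uniq [:: a; b; c] -> factorization at3 off3.
Proof.
rewrite /= !inE !negb_or => /andP [/andP [ab ac] /andP [bc _]].
split=> [x y [eq1 eq2] [eq_a eq_b eq_c]|x [[va vb] vc]].
  by apply: idx_ext eq1 (mask_inj eq2 _) => i /or3P [] /eqP ->.
exists (x.1, ffun_upd (ffun_upd (ffun_upd x.2 a va) b vb) c vc).
rewrite /at3 /off3 /= !ffun_updE !mask_upd ?inE ?eqxx ?orbT //.
by rewrite (negbTE ab) (negbTE ac) (negbTE bc).
Qed.

Lemma factorization4 : uniq [:: a; b; c; e] -> factorization at4 off4.
Proof.
rewrite /= !inE !negb_or => /andP [/and3P [ab ac ae] /andP [/andP [bc be] /andP [ce _]]].
split=> [x y [eq1 eq2] [eq_a eq_b eq_c eq_e]|x [[va vb] [vc ve]]].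
  by apply: idx_ext eq1 (mask_inj eq2 _) => i /or4P [] /eqP ->.
exists (x.1, ffun_upd (ffun_upd (ffun_upd (ffun_upd x.2 a va) b vb) c vc) e ve).
rewrite /at4 /off4 /= !ffun_updE !mask_upd ?inE ?eqxx ?orbT //.
by rewrite (negbTE ab) (negbTE ac) (negbTE ae) (negbTE bc) (negbTE be) (negbTE ce).
Qed.

Lemma factorizationW : factorization atW offW.
Proof.
split=> [x y eq_off [eq1 eq0]|x [w v]].
  by apply: idx_ext eq1 (mask_inj eq_off _) => i /eqP ->.
by exists (w, ffun_upd x.2 ord0 v); rewrite /atW /offW /= ffun_updE eqxx mask_upd.
Qed.

Lemma factorizationW3 : uniq [:: ord0; b; c] -> factorization atW3 offW3.
Proof.
rewrite /= !inE !negb_or => /andP [/andP [ob oc] /andP [bc _]].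
split=> [x y eq_off [eq1 eq0 eq_b eq_c]|x [[w v0] [vb vc]]].
  by apply: idx_ext eq1 (mask_inj eq_off _) => i /or3P [] /eqP ->.
exists (w, ffun_upd (ffun_upd (ffun_upd x.2 ord0 v0) b vb) c vc).
rewrite /atW3 /offW3 /= !ffun_updE !mask_upd ?inE ?eqxx ?orbT //.
by rewrite (negbTE ob) (negbTE oc) (negbTE bc).
Qed.

End Positions.

Lemma ord2_cases (i : 'I_2) : i = ord0 \/ i = ord_max.
Proof. by case: i => [[|[|//]] lt_i2]; [left|right]; apply: val_inj. Qed.

Section FirstTwoCoordinates.
Hypothesis N_gt0 : (0 < N)%N.

Lemma inord0N : (inord 0 : 'I_N.+1) = ord0.
Proof. exact/val_inj/inordK. Qed.

Lemma ord0_neq_inord1 : (ord0 : 'I_N.+1) != inord 1.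
Proof. by rewrite -val_eqE /= inordK. Qed.

Definition at_first2 x : idx m n 1 := (x.1, [ffun i : 'I_2 => x.2 (inord i)]).
Definition off_first2 x := mask (pred2 ord0 (inord 1)) x.2.

Lemma factorization_first2 : factorization at_first2 off_first2.
Proof.
split=> [x y eq_off [eq1 /ffunP eq2]|x [w g]].
  apply: idx_ext eq1 (mask_inj eq_off _) => i /pred2P [] ->.
    by have := eq2 ord0; rewrite !ffunE inord0N.
  by have := eq2 ord_max; rewrite !ffunE.
exists (w, ffun_upd (ffun_upd x.2 ord0 (g ord0)) (inord 1) (g ord_max)).
rewrite /at_first2 /off_first2 /= !mask_upd ?inE ?eqxx ?orbT //; split=> //.
congr pair; apply/ffunP => i; rewrite !ffunE.
case: (ord2_cases i) => -> /=; rewrite ?inord0N eqxx //.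
by rewrite (negbTE ord0_neq_inord1).
Qed.

End FirstTwoCoordinates.
End Coordinates.

Arguments atW {m n N}.
Arguments offW {m n N}.
Arguments at_first2 {m n N}.
Arguments off_first2 {m n N}.
Arguments factorization2 {m n N a b}.
Arguments factorization3 {m n N a b c}.
Arguments factorization4 {m n N a b c e}.
Arguments factorizationW {m n N}.
Arguments factorizationW3 {m n N b c}.
Arguments factorization_first2 {m n N}.

Section LocalOperators.
Variables (gT : finGroupType) (m n N : nat).
Variables (pi : gT -> Op ('I_m * 'I_n)%type) (R : Op ('I_n * 'I_n)%type).
Local Notation r := (Ri m R N).
Local Notation P := (Pi pi N).

Lemma agree_off2 (a b : 'I_N.+1) (f g : {ffun 'I_N.+1 -> 'I_n}) :
  [forall j, ((j != a) && (j != b)) ==> (f j == g j)] = agree_off (pred2 a b) f g.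
Proof. by apply: eq_forallb => j; rewrite /= negb_or. Qed.

Lemma inord_eq0 k : (k <= N)%N -> ((inord k : 'I_N.+1) == ord0) = (k == 0)%N.
Proof. by move=> le_kN; rewrite -val_eqE /= inordK. Qed.

Ltac coord_side := first
  [ by rewrite /= ?[ord0 == _]eq_sym ?inord_eq0 ?inord_eq //; lia
  | by move=> ? /=; do ?case: (_ == _) ].

Lemma Ri_loc2 k : (k < N)%N ->
  r k = loc (at2 (inord k) (inord k.+1)) (off2 (inord k) (inord k.+1)) R.
Proof.
move=> lt_kN; apply: opP => x y.
by rewrite !entE lt_kN xpair_eqE mask_eq agree_off2 -mulnb natrM /at2; ring.
Qed.

Lemma Ri_loc3_12 k : (k.+1 < N)%N ->
  r k = loc (at3 (inord k) (inord k.+1) (inord k.+2))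
            (off3 (inord k) (inord k.+1) (inord k.+2)) (R12 R).
Proof.
move=> lt_k1N; apply: opP => x y; rewrite !entE ltnW //= xpair_eqE mask_eq agree_off2.
rewrite (agree_off_split (T := pred3 (inord k) (inord k.+1) (inord k.+2)) (c := inord k.+2));
  try coord_side.
by rewrite -!mulnb !natrM /at3; ring.
Qed.

Lemma Ri_loc3_23 k : (k.+1 < N)%N ->
  r k.+1 = loc (at3 (inord k) (inord k.+1) (inord k.+2))
               (off3 (inord k) (inord k.+1) (inord k.+2)) (R23 R).
Proof.
move=> lt_k1N; apply: opP => x y; rewrite !entE lt_k1N /= xpair_eqE mask_eq agree_off2.
rewrite (agree_off_split (T := pred3 (inord k) (inord k.+1) (inord k.+2)) (c := inord k));
  try coord_side.
by rewrite -!mulnb !natrM /at3; ring.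
Qed.

Lemma Ri_loc4_l j k : (j.+1 < k < N)%N ->
  r j = loc (at4 (inord j) (inord j.+1) (inord k) (inord k.+1))
            (off4 (inord j) (inord j.+1) (inord k) (inord k.+1)) (ltens _ R).
Proof.
move=> /andP [lt_j1k lt_kN]; have lt_jN : (j < N)%N by lia.
apply: opP => x y; rewrite !entE lt_jN /= !xpair_eqE mask_eq agree_off2.
rewrite (agree_off_split (T := [pred i | pred3 (inord j) (inord j.+1) (inord k) i])
  (c := inord k)); try coord_side.
rewrite (agree_off_split (T := pred4 (inord j) (inord j.+1) (inord k) (inord k.+1))
  (c := inord k.+1)); try coord_side.
by rewrite -!mulnb !natrM /at4; ring.
Qed.

Lemma Ri_loc4_r j k : (j.+1 < k < N)%N ->
  r k = loc (at4 (inord j) (inord j.+1) (inord k) (inord k.+1))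
            (off4 (inord j) (inord j.+1) (inord k) (inord k.+1)) (rtens _ R).
Proof.
move=> /andP [lt_j1k lt_kN].
apply: opP => x y; rewrite !entE lt_kN /= !xpair_eqE mask_eq agree_off2.
rewrite (agree_off_split (T := [pred i | pred3 (inord j) (inord k) (inord k.+1) i])
  (c := inord j)); try coord_side.
rewrite (agree_off_split (T := pred4 (inord j) (inord j.+1) (inord k) (inord k.+1))
  (c := inord j.+1)); try coord_side.
by rewrite -!mulnb !natrM /at4; ring.
Qed.

Lemma agree_off1 (f g : {ffun 'I_N.+1 -> 'I_n}) :
  [forall j, (j != ord0) ==> (f j == g j)] = agree_off (pred1 ord0) f g.
Proof. exact: eq_forallb. Qed.

Lemma Pi_locW t : P t = loc atW offW (pi t).
Proof. by apply: opP => x y; rewrite !entE mask_eq agree_off1. Qed.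

Lemma Pi_locW3 k t : (0 < k < N)%N ->
  P t = loc (atW3 (inord k) (inord k.+1)) (offW3 (inord k) (inord k.+1)) (ltens _ (pi t)).
Proof.
move=> /andP [k_gt0 lt_kN]; apply: opP => x y.
rewrite !entE /= !xpair_eqE mask_eq agree_off1.
rewrite (agree_off_split (T := [pred i | pred2 ord0 (inord k) i]) (c := inord k));
  try coord_side.
rewrite (agree_off_split (T := pred3 ord0 (inord k) (inord k.+1)) (c := inord k.+1));
  try coord_side.
by rewrite -!mulnb !natrM /atW3; ring.
Qed.

Lemma Ri_locW3 k : (0 < k < N)%N ->
  r k = loc (atW3 (inord k) (inord k.+1)) (offW3 (inord k) (inord k.+1)) (rtens _ R).
Proof.
move=> /andP [k_gt0 lt_kN]; apply: opP => x y.
rewrite !entE lt_kN /= !xpair_eqE mask_eq agree_off2.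
rewrite (agree_off_split (T := pred3 ord0 (inord k) (inord k.+1)) (c := ord0));
  try coord_side.
by rewrite -!mulnb !natrM /atW3; ring.
Qed.

Lemma forall_ord2 (Q : pred 'I_2) : [forall j : 'I_2, (j != ord0) ==> Q j] = Q ord_max.
Proof.
apply/forallP/idP => [/(_ ord_max) //|Q1 j].
by case: (ord2_cases j) => ->.
Qed.

Lemma forall_ord2_off01 (Q : pred 'I_2) :
  [forall j : 'I_2, ((j != inord 0) && (j != inord 1)) ==> Q j].
Proof. by apply/forallP => j; case: (ord2_cases j) => ->; rewrite -!val_eqE /= !inordK. Qed.

Section FirstTwoCoordinates.
Hypothesis N_gt0 : (0 < N)%N.

Lemma Pi_first2 t : P t = loc at_first2 off_first2 (Pi pi 1 t).
Proof.
apply: opP => x y; rewrite !entE /= mask_eq agree_off1 forall_ord2 !ffunE /= inord0N //.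
rewrite (agree_off_split (T := pred2 ord0 (inord 1)) (c := inord 1)); try coord_side.
by rewrite -!mulnb !natrM; ring.
Qed.

Lemma Ri_first2 : r 0 = loc at_first2 off_first2 (Ri m R 1 0).
Proof.
apply: opP => x y; rewrite !entE N_gt0 /= mask_eq agree_off2 forall_ord2_off01 !ffunE.
by rewrite !inordK // inord0N // mulr1.
Qed.

End FirstTwoCoordinates.
End LocalOperators.

Arguments Ri_loc2 {m n N R k}.
Arguments Ri_loc3_12 {m n N R k}.
Arguments Ri_loc3_23 {m n N R k}.
Arguments Ri_loc4_l {m n N R j k}.
Arguments Ri_loc4_r {m n N R j k}.
Arguments Ri_locW3 {m n N R k}.
Arguments Ri_first2 {m n N R}.
Arguments Pi_locW {gT m n N pi}.
Arguments Pi_locW3 {gT m n N pi k}.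
Arguments Pi_first2 {gT m n N pi}.

(** * Yang-Baxter couples *)

Section YangBaxterCouple.
Variables (gT : finGroupType) (m n : nat).
Variables (pi : gT -> Op ('I_m * 'I_n)%type) (R : Op ('I_n * 'I_n)%type).
Hypothesis pi1 : pi 1%g = 1%:M.
Hypothesis R_invol : Rinvolutive R.

Lemma Ri_invol N k : (k < N)%N -> Ri m R N k *m Ri m R N k = 1%:M.
Proof.
move=> lt_kN; have ne_k : (inord k : 'I_N.+1) != inord k.+1 by rewrite inord_eq; lia.
by rewrite Ri_loc2 // (locM (factorization2 ne_k)) R_invol (loc1 (factorization2 ne_k)).
Qed.

Lemma Pi1 N : Pi pi N 1%g = 1%:M.
Proof. by rewrite Pi_locW pi1 (loc1 factorizationW). Qed.

Lemma YBcouple_ERE : YBcouple pi R -> ERE pi R.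
Proof.
move=> /(_ 1%N) [rho [_ rhoM _ rho_base]] t t'.
pose a : {ffun 'I_2 -> gT} := [ffun i => if i == ord0 then 1%g else t].
pose b : {ffun 'I_2 -> gT} := [ffun i => if i == ord0 then t' else 1%g].
have ab_comm : mulG (a, 1%g) (b, 1%g) = mulG (b, 1%g) (a, 1%g).
  rewrite /mulG /= invg1; congr pair; apply/ffunP => i; rewrite !ffunE !perm1.
  by case: (i == ord0); rewrite ?mul1g ?mulg1.
have rhoD2 d : rhoD pi R d =
    Pi pi 1 (d ord0) *m (Ri m R 1 0 *m Pi pi 1 (d ord_max) *m Ri m R 1 0).
  rewrite /rhoD big_ord_recr big_ord_recr big_ord0 /=; congr (_ *m _).
  by rewrite (_ : widen_ord _ _ = ord0); [apply: mul1mx | apply: val_inj].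
have := congr1 rho ab_comm; rewrite !rhoM !rho_base !rhoD2 !ffunE /= Pi1 mul1mx.
by rewrite !mulmx1 Ri_invol // !mulmx1 !mulmxA.
Qed.

Hypothesis piM : forall s t : gT, pi (s * t)%g = pi s *m pi t.
Hypothesis R_ybe : YBE R.

Lemma Ri_coxeter N : coxeter_relations N (Ri m R N).
Proof.
split=> [k|k lt_k1N|j k lt_j1k lt_kN]; first exact: Ri_invol.
  have uniq_k : uniq [:: inord k; inord k.+1; inord k.+2 : 'I_N.+1].
    by rewrite /= !inE !inord_eq; lia.
  by rewrite Ri_loc3_12 // Ri_loc3_23 // !(locM (factorization3 uniq_k)) R_ybe.
have uniq_jk : uniq [:: inord j; inord j.+1; inord k; inord k.+1 : 'I_N.+1].
  by rewrite /= !inE !inord_eq; lia.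
have lt_jkN : (j.+1 < k < N)%N by rewrite lt_j1k.
rewrite (Ri_loc4_l lt_jkN) (Ri_loc4_r lt_jkN) !(locM (factorization4 uniq_jk)).
by rewrite ltens_rtens_comm.
Qed.

Lemma Pi_wreath N : ERE pi R -> wreath_relations N (Ri m R N) (Pi pi N).
Proof.
move=> ere; split=> [||s t|t k lt_0kN|N_gt0 t t'].
- exact: Ri_coxeter.
- exact: Pi1.
- by rewrite !Pi_locW piM (locM factorizationW).
- have uniq_k : uniq [:: ord0; inord k; inord k.+1 : 'I_N.+1].
    by rewrite /= !inE !inord_eq ?[ord0 == _]eq_sym ?inord_eq0; lia.
  rewrite /comm_mx (Pi_locW3 _ lt_0kN) (Ri_locW3 lt_0kN).
  by rewrite !(locM (factorizationW3 uniq_k)) ltens_rtens_comm.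
- rewrite (Ri_first2 N_gt0) !(Pi_first2 N_gt0).
  by rewrite !(locM (factorization_first2 N_gt0)) ere.
Qed.

Lemma rhoD_base_rep N d :
  rhoD pi R d = base_rep N (Ri m R N) (Pi pi N) (fun k => d (inord k)).
Proof.
rewrite /rhoD /base_rep big_mkord; apply: eq_bigr => i _; rewrite inord_val.
by elim: (nat_of_ord i) => //= k ->.
Qed.

Section Construction.
Hypothesis ere : ERE pi R.
Variable N : nat.
Local Notation r := (Ri m R N).
Local Notation rhoD := (@rhoD m n gT pi R N).
Let wr := Pi_wreath N ere.

Lemma rhoDM (a b : {ffun 'I_N.+1 -> gT}) :
  rhoD [ffun i => a i * b i]%g = rhoD a *m rhoD b.
Proof.
rewrite !rhoD_base_rep -(base_repM wr).
by apply: eq_big_nat => i _; rewrite ffunE.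
Qed.

Lemma rhoD1 : rhoD [ffun=> 1%g] = 1%:M.
Proof. by rewrite rhoD_base_rep -(base_rep1 wr); apply: eq_big_nat => i _; rewrite ffunE. Qed.

Lemma r_rhoD k d : (k < N)%N -> r k *m rhoD d = rhoD [ffun i => d (sgen N k i)] *m r k.
Proof.
move=> lt_kN; rewrite !rhoD_base_rep (r_base_rep wr) //; congr (_ *m _).
by apply: eq_big_nat => i /andP [_ lt_iN1]; rewrite ffunE sgen_inord.
Qed.

Lemma perm_rep_rhoD s d :
  perm_rep r s *m rhoD d = rhoD [ffun i => d (s^-1 i)%g] *m perm_rep r s.
Proof.
elim/sgen_ind: s d => [|s k lt_kN IHs] d.
  rewrite perm_rep1 mul1mx mulmx1; congr rhoD.
  by apply/ffunP => i; rewrite ffunE invg1 perm1.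
rewrite !(perm_rep_sgenM (wreath_coxeter wr)) // -mulmxA r_rhoD // mulmxA IHs -mulmxA.
congr (rhoD _ *m _); apply/ffunP => i.
by rewrite !ffunE invMg permM /sgen tpermV.
Qed.

Definition wreath_rep (g : GN gT N) := rhoD g.1 *m perm_rep r g.2.

Lemma wreath_repM g h : wreath_rep (mulG g h) = wreath_rep g *m wreath_rep h.
Proof.
case: g h => [dg sg] [dh sh]; rewrite /wreath_rep /mulG /=.
rewrite (_ : [ffun i => _] = [ffun i => dg i * [ffun j => dh (sg^-1 j)%g] i]%g); last first.
  by apply/ffunP => i; rewrite !ffunE.
rewrite rhoDM (perm_repM (wreath_coxeter wr)) !mulmxA; congr (_ *m _).
by rewrite -!mulmxA perm_rep_rhoD.
Qed.

Lemma YBcouple_level : exists rho : GN gT N -> Op (idx m n N),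
  [/\ rho (unitG gT N) = 1%:M,
      forall g h, rho (mulG g h) = rho g *m rho h,
      forall k, (k < N)%N -> rho ([ffun => 1%g], sgen N k) = r k
    & forall d, rho (d, 1%g) = rhoD d].
Proof.
exists wreath_rep; split=> [|||d]; rewrite /wreath_rep /=.
- by rewrite rhoD1 perm_rep1 mulmx1.
- exact: wreath_repM.
- by move=> k lt_kN; rewrite rhoD1 mul1mx (perm_rep_sgen (wreath_coxeter wr)).
- by rewrite perm_rep1 mulmx1.
Qed.

End Construction.

End YangBaxterCouple.

Theorem mainTheorem1 (gT : finGroupType) (m n : nat)
    (pi : gT -> Op ('I_m * 'I_n)%type) (R : Op ('I_n * 'I_n)%type) :
  unitary_rep pi -> Rinvolutive R -> YBE R ->
  (YBcouple pi R <-> (YBE R /\ ERE pi R)).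
Proof.
move=> [pi1 [piM _]] R_invol R_ybe; split=> [couple|[_ ere] N].
  by split; last exact: YBcouple_ERE.
exact: YBcouple_level.
Qed.
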